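(* Let $G$ be a connected non-complete graph. If $\mu_t(G)=n(G)-\operatorname{diam}(G)+1$, then $\gamma_c(G)=\operatorname{diam}(G)-1$.
   Context: All graphs are finite, simple and undirected; $n(G)$ denotes the order of $G$ and $\operatorname{diam}(G)$ its diameter. The connected domination number $\gamma_c(G)$ is the minimum cardinality of a dominating set $D$ of $G$ such that the induced subgraph $G[D]$ is connected. Let $G$ be a connected graph and $X\subseteq V(G)$. Two vertices $x,y\in V(G)$ are $X$-visible if there exists a shortest $x,y$-path in $G$ none of whose internal vertices (i.e., vertices other than $x$ and $y$) belongs to $X$. The set $X$ is a total mutual-visibility set of $G$ if every two vertices of $G$ are $X$-visible (the empty set is allowed). The total mutual-visibility number $\mu_t(G)$ is the maximum cardinality of a total mutual-visibility set of $G$. *)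

From mathcomp Require Import all_boot.
Set Implicit Arguments. Unset Strict Implicit. Unset Printing Implicit Defensive.

Definition simple_graph (T : finType) (e : rel T) : Prop :=
  symmetric e /\ irreflexive e.

Definition connected_graph (T : finType) (e : rel T) : Prop :=
  forall x y : T, connect e x y.

Definition complete_graph (T : finType) (e : rel T) : Prop :=
  forall x y : T, x != y -> e x y.

Fixpoint ball (T : finType) (e : rel T) (k : nat) (x : T) : {set T} :=
  match k with
  | 0 => [set x]
  | k'.+1 => ball e k' x :|: [set z | [exists w in ball e k' x, e w z]]
  end.

(* graph distance (meaningful when x,y are connected; then it is < #|T|) *)
Definition dist (T : finType) (e : rel T) (x y : T) : nat :=
  find (fun k => y \in ball e k x) (iota 0 #|T|).

Definition diam (T : finType) (e : rel T) : nat :=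
  \max_(x : T) \max_(y : T) dist e x y.

(* p is a shortest x,y-path: the walk x :: p, ending at y, of length dist x y *)
Definition shortest_path (T : finType) (e : rel T) (x y : T) (p : seq T) : bool :=
  [&& path e x p, last x p == y & size p == dist e x y].

(* internal vertices of the path x :: p (all except the two end vertices) *)
Definition internal (T : finType) (x : T) (p : seq T) : seq T :=
  behead (belast x p).

Definition X_visible (T : finType) (e : rel T) (X : {set T}) (x y : T) : Prop :=
  exists p : seq T, shortest_path e x y p /\ all (fun v => v \notin X) (internal x p).

Definition total_mutual_visibility_set (T : finType) (e : rel T) (X : {set T}) : Prop :=
  forall x y : T, X_visible e X x y.

Definition is_mu_t (T : finType) (e : rel T) (m : nat) : Prop :=
  (exists X : {set T}, total_mutual_visibility_set e X /\ #|X| = m) /\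
  (forall X : {set T}, total_mutual_visibility_set e X -> #|X| <= m).

Definition dominating (T : finType) (e : rel T) (D : {set T}) : bool :=
  [forall v, (v \in D) || [exists u in D, e u v]].

Definition induced_connected (T : finType) (e : rel T) (D : {set T}) : Prop :=
  forall x y, x \in D -> y \in D ->
    connect (fun u v => [&& e u v, u \in D & v \in D]) x y.

Definition connected_dominating (T : finType) (e : rel T) (D : {set T}) : Prop :=
  dominating e D /\ induced_connected e D.

Definition is_gamma_c (T : finType) (e : rel T) (m : nat) : Prop :=
  (exists D : {set T}, connected_dominating e D /\ #|D| = m) /\
  (forall D : {set T}, connected_dominating e D -> m <= #|D|).

From mathcomp Require Import all_boot.
From mathcomp Require Import zify.

Set Implicit Arguments.
Unset Strict Implicit.
Unset Printing Implicit Defensive.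

Section Distances.

Variables (T : finType) (e : rel T).

Lemma ball_path x p : path e x p -> last x p \in ball e (size p) x.
Proof.
elim/last_ind: p => [|p z IHp]; first by rewrite /= inE.
rewrite rcons_path last_rcons size_rcons => /andP[/IHp Hlast Hz] /=.
by rewrite !inE; apply/orP; right; apply/existsP; exists (last x p); rewrite Hlast.
Qed.

Lemma dist_ball x y k : y \in ball e k x -> dist e x y <= k.
Proof.
move=> Hy; rewrite /dist; have [ltkT|leTk] := ltnP k #|T|.
  rewrite leqNgt; apply/negP => /(before_find 0).
  by rewrite nth_iota // add0n Hy.
by apply: leq_trans (find_size _ _) _; rewrite size_iota.
Qed.

Lemma dist_path x p : path e x p -> dist e x (last x p) <= size p.
Proof. by move/ball_path/dist_ball. Qed.

Lemma dist_le_card x y : dist e x y <= #|T|.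
Proof. by apply: leq_trans (find_size _ _) _; rewrite size_iota. Qed.

Lemma dist_gt0 x y : x != y -> 0 < dist e x y.
Proof.
move=> neq_xy; rewrite /dist; have : 0 < #|T| by apply/card_gt0P; exists x.
by case: #|T| => [//|n] _ /=; rewrite in_set1 eq_sym (negbTE neq_xy).
Qed.

Lemma dist_le_diam x y : dist e x y <= diam e.
Proof.
apply: leq_trans (leq_bigmax x).
exact: (leq_bigmax (F := fun y => dist e x y) y).
Qed.

Lemma diam_le m : (forall x y, dist e x y <= m) -> diam e <= m.
Proof. by move=> Hm; apply/bigmax_leqP => x _; apply/bigmax_leqP => y _. Qed.

Lemma dist_walk_ends x x' y p :
  path e x' p -> x' = x \/ e x x' -> last x' p = y \/ e (last x' p) y ->
  dist e x y <= (size p).+2.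
Proof.
have walk_end z q : path e z q -> last z q = y \/ e (last z q) y ->
    dist e z y <= (size q).+1.
  move=> Hq [<-|Hy]; first by rewrite leqW // dist_path.
  have Hqy : path e z (rcons q y) by rewrite rcons_path Hq.
  by have := dist_path Hqy; rewrite last_rcons size_rcons.
move=> Hp [<-|Hxx'] Hy; first by rewrite leqW // walk_end.
by apply: (walk_end x (x' :: p)); rewrite //= Hxx'.
Qed.

End Distances.

Section Visibility.

Variables (T : finType) (e : rel T) (X : {set T}).

Lemma mem_internal_last (x z : T) p :
  z \in p -> z = last x p \/ z \in internal x p.
Proof.
case: p => [//|y s]; rewrite /internal /= (lastI y s) mem_rcons in_cons.
by case/orP=> [/eqP->|Hz]; [left|right].
Qed.

(* If two distinct vertices are X-visible and the target lies outside X,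
   the source has a neighbour outside X: the second vertex of the path. *)
Lemma visible_neighbour_outside v w :
  X_visible e X v w -> v != w -> w \notin X -> exists2 u, u \notin X & e v u.
Proof.
move=> [[|h [|h' r]] [/and3P[Hp /eqP Hlast _] Hint]] neq_vw Hw.
- by move: neq_vw; rewrite -Hlast eqxx.
- by rewrite /= in Hlast; exists h; [rewrite Hlast|case/andP: Hp].
- by exists h; [case/andP: Hint|case/andP: Hp].
Qed.

(* Two distinct non-adjacent X-visible vertices witness a vertex outside X:
   the first internal vertex of a shortest path between them. *)
Lemma visible_nonadjacent_outside a b :
  X_visible e X a b -> a != b -> ~~ e a b -> exists w, w \notin X.
Proof.
move=> [[|h [|h' r]] [/and3P[Hp /eqP Hlast _] Hint]] neq_ab nadj_ab.
- by move: neq_ab; rewrite -Hlast eqxx.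
- by rewrite /= in Hlast; move: nadj_ab; rewrite -Hlast; case/andP: Hp => ->.
- by exists h; case/andP: Hint.
Qed.

Hypothesis tmvX : total_mutual_visibility_set e X.

Lemma tmv_compl_dominating w :
  symmetric e -> w \notin X -> dominating e (~: X).
Proof.
move=> sym_e Hw; apply/forallP => v; rewrite inE.
have [vX|] //= := boolP (v \in X).
have neq_vw : v != w by apply: contraNneq Hw => <-.
have [u Hu Hvu] := visible_neighbour_outside (tmvX v w) neq_vw Hw.
by apply/existsP; exists u; rewrite inE Hu sym_e.
Qed.

(* A shortest path between two vertices outside X stays outside X, so the
   complement of X induces a connected subgraph. *)
Lemma tmv_compl_induced_connected : induced_connected e (~: X).
Proof.
move=> u v Hu Hv; have [p [/and3P[Hp /eqP Hlast _] Hint]] := tmvX u v.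
apply/connectP; exists p => //.
have Hin : all (fun z => z \in ~: X) p.
  apply/allP => z /(mem_internal_last u) [->|Hz]; first by rewrite Hlast.
  by rewrite inE (allP Hint z Hz).
elim: p u Hp Hu Hin {Hlast Hint} => //= y s IHs u /andP[Huy Hs] Hu /andP[Hy Hin].
by rewrite Huy Hu Hy IHs.
Qed.

End Visibility.

Section ConnectedDomination.

Variables (T : finType) (e : rel T).
Hypothesis sym_e : symmetric e.

Lemma induced_path_in (D : {set T}) x p :
  path (fun u v => [&& e u v, u \in D & v \in D]) x p -> {subset p <= D}.
Proof.
elim: p x => //= y s IHs x /andP[/and3P[_ _ Hy] Hs] z.
by rewrite in_cons => /orP[/eqP->//|]; apply: IHs Hs z.
Qed.

Lemma dominator D x :
  dominating e D -> exists2 x', x' \in D & x' = x \/ e x x'.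
Proof.
move/forallP/(_ x)/orP => [Hx|/existsP[u /andP[Hu Hux]]].
  by exists x; [|left].
by exists u; [|right; rewrite sym_e].
Qed.

(* Any two vertices are at distance at most #|D| + 1 from each other, for a
   connected dominating set D: join their dominators by a duplicate-free
   path inside D, which has at most #|D| - 1 edges. *)
Lemma connected_dominating_dist D x y :
  connected_dominating e D -> dist e x y <= #|D|.+1.
Proof.
move=> [domD connD].
have [x' Hx' Hxx'] := dominator x domD.
have [y' Hy' Hyy'] := dominator y domD.
have /connectP[p HpD Hlast] := connD x' y' Hx' Hy'.
case: (shortenP HpD) Hlast => p' Hp'D uniq_p' _ Hlast.
have Hsize : (size p').+1 <= #|D|.
  rewrite -[(size p').+1]/(size (x' :: p')) -(card_uniqP uniq_p').
  apply/subset_leq_card/subsetP => z; rewrite in_cons => /orP[/eqP->//|].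
  exact: induced_path_in Hp'D z.
have Hp' : path e x' p' by apply: sub_path Hp'D => u v /and3P[].
have Hy : last x' p' = y \/ e (last x' p') y.
  by rewrite -Hlast sym_e.
by apply: leq_trans (dist_walk_ends Hp' Hxx' Hy) _; rewrite ltnS.
Qed.

Lemma connected_dominating_diam D :
  connected_dominating e D -> diam e - 1 <= #|D|.
Proof.
move=> cdD; have := diam_le (fun x y => connected_dominating_dist x y cdD).
by lia.
Qed.

End ConnectedDomination.

Lemma noncomplete_pair (T : finType) (e : rel T) :
  ~ complete_graph e -> exists a b, a != b /\ ~~ e a b.
Proof.
move=> not_complete.
have [/existsP[a /existsP[b /andP[neq_ab nadj]]]|none] :=
  boolP [exists a, exists b, (a != b) && ~~ e a b]; first by exists a, b.
exfalso; apply: not_complete => x y neq_xy; apply/negPn/negP => nadj.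
by apply/(negP none)/existsP; exists x; apply/existsP; exists y; rewrite neq_xy.
Qed.

Theorem corollary2p5 (T : finType) (e : rel T) :
  simple_graph e -> connected_graph e -> ~ complete_graph e ->
  is_mu_t e (#|T| - diam e + 1) ->
  is_gamma_c e (diam e - 1).
Proof.
move=> [sym_e _] _ not_complete [[X [tmvX cardX]] _].
have [a [b [neq_ab nadj_ab]]] := noncomplete_pair not_complete.
have [w Hw] := visible_nonadjacent_outside (tmvX a b) neq_ab nadj_ab.
have diam_gt0 : 0 < diam e by apply: leq_trans (dist_gt0 e neq_ab) (dist_le_diam e a b).
have diam_le_card : diam e <= #|T| by apply: diam_le => x y; apply: dist_le_card.
split; last by move=> D; apply: connected_dominating_diam.
exists (~: X); split.
  by split; [apply: tmv_compl_dominating Hw|apply: tmv_compl_induced_connected].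
by have := cardsC X; rewrite cardX; lia.
Qed.
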